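(* Consider an instance of $P|G=\textit{block graph},p_j=1|C_{\max}$ with $m\ge 2$ identical machines and $n\ge 1$ unit-time jobs whose block conflict graph $G$ has $\omega(G)\le m$, and write $n=d(m-1)+r$ with integers $d\ge 0$ and $r\in\{0,\dots,m-2\}$. The greedy algorithm described in the context returns a schedule in which every machine is assigned at most $\lceil n/(m-1)\rceil$ jobs. Moreover, if $r=0$ then at least one machine is assigned strictly fewer than $\lceil n/(m-1)\rceil$ jobs, and if $r>0$ then at least $m-r$ machines are assigned strictly fewer than $\lceil n/(m-1)\rceil$ jobs.
   Context: Scheduling with a conflict graph: jobs $J$, machines $M=\{M_1,\dots,M_m\}$, conflict graph $G=(J,E)$; a schedule is a map $\sigma:J\to M$ with adjacent jobs on different machines. Here all processing times are $1$, so a machine's load is the number of jobs assigned to it. A block graph is a graph in which every maximal 2-connected component is a clique; a block is a maximal clique; a cut-vertex is a vertex in at least two blocks. The block-cut forest $T_G$ has a node for each block and each cut-vertex, with a block node adjacent to a cut-vertex node iff the cut-vertex lies in the block; each component is rooted arbitrarily. Greedy algorithm: list the blocks in the order of a pre-order traversal of (each component of) the rooted block-cut forest. Process the blocks in this order. For the current block $B$, let $L_J$ be the jobs of $B$ (sorted by non-increasing processing time) and let $L_M$ be the $|B|$ machines of smallest current load, sorted by non-decreasing current load (ties broken arbitrarily). If $B$ has a parent cut-vertex $u$ in $T_G$ that has already been assigned to some machine $M'$, then: if $M'\in L_M$ remove $M'$ from $L_M$, otherwise remove the last machine of $L_M$; and remove $u$ from $L_J$. Then assign the $i$-th job of $L_J$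 to the $i$-th machine of $L_M$ for $i=1,\dots,|L_M|$, updating loads. *)

From mathcomp Require Import all_boot.
Set Implicit Arguments.
Unset Strict Implicit.
Unset Printing Implicit Defensive.

Section Graphs.
Variables (T : finType) (e : rel T).

Definition restr (S : {set T}) : rel T :=
  fun a b => [&& a \in S, b \in S & e a b].
Definition connected_in (S : {set T}) : Prop :=
  forall x y, x \in S -> y \in S -> connect (restr S) x y.
Definition nonseparable (S : {set T}) : Prop :=
  [/\ S != set0, connected_in S & forall v, v \in S -> connected_in (S :\ v)].
Definition max_nonseparable (S : {set T}) : Prop :=
  nonseparable S /\ (forall S', nonseparable S' -> S \subset S' -> S' = S).
Definition is_clique (S : {set T}) : Prop :=
  forall x y, x \in S -> y \in S -> x != y -> e x y.
Definition block_graph : Prop :=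
  forall S, max_nonseparable S -> is_clique S.
Definition is_block (B : {set T}) : Prop :=
  [/\ B != set0, is_clique B & forall C, is_clique C -> B \subset C -> C = B].
Definition is_cut (v : T) : Prop :=
  exists B1 B2, [/\ is_block B1, is_block B2, B1 != B2, v \in B1 & v \in B2].
Definition clique_bound (k : nat) : Prop :=
  forall S, is_clique S -> #|S| <= k.

(* block-cut forest: nodes are blocks (inl) and cut-vertices (inr) *)
Definition bc_node := ({set T} + T)%type.
Definition in_bc (x : bc_node) : Prop :=
  match x with inl B => is_block B | inr v => is_cut v end.
Definition bc_adj (x y : bc_node) : bool :=
  match x, y with
  | inl B, inr v => v \in B
  | inr v, inl B => v \in B
  | _, _ => false
  end.

(* a rooting of the block-cut forest, given by a parent function:
   every forest edge is oriented child -> parent, and there are no cycles *)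
Definition rooting (par : bc_node -> option bc_node) : Prop :=
  [/\ forall x y, par x = Some y -> [/\ in_bc x, in_bc y & bc_adj x y],
      forall x y, in_bc x -> in_bc y -> bc_adj x y -> par x = Some y \/ par y = Some x
    & exists dep : bc_node -> nat, forall x y, par x = Some y -> dep y < dep x].

(* desc par x y : y is a descendant of x (or x itself) *)
Definition desc (par : bc_node -> option bc_node) (x y : bc_node) : bool :=
  connect (fun a b : bc_node => par a == Some b) y x.

(* s is a pre-order traversal of the rooted forest: it lists every node
   exactly once, and the descendants of each node form a contiguous
   segment of s starting at that node *)
Definition preorder (par : bc_node -> option bc_node) (s : seq bc_node) : Prop :=
  [/\ uniq s, forall x, x \in s <-> in_bc x,
      forall x y, x \in s -> y \in s -> desc par x y -> index x s <= index y s
    & forall x y z, x \in s -> y \in s -> z \in s -> desc par x y ->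
        index x s <= index z s -> index z s <= index y s -> desc par x z].

Definition parent_cut (par : bc_node -> option bc_node) (x : bc_node) : option T :=
  match par x with Some (inr u) => Some u | _ => None end.

Definition block_seq (par : bc_node -> option bc_node) (s : seq bc_node)
  : seq ({set T} * option T) :=
  pmap (fun x => match x with
                 | inl B => Some (B, parent_cut par x)
                 | inr _ => None end) s.

Variable m : nat.

Definition load (s : T -> option 'I_m) (M : 'I_m) : nat :=
  #|[set x | s x == Some M]|.

(* the modification of L_J, L_M for an already assigned parent cut-vertex *)
Definition adjust (s : T -> option 'I_m) (pu : option T)
    (LJ : seq T) (LM : seq 'I_m) : seq T * seq 'I_m :=
  match pu with
  | Some u =>
      match s u with
      | Some M' => (rem u LJ,
                    if M' \in LM then rem M' LM else take (size LM).-1 LM)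
      | None => (LJ, LM)
      end
  | None => (LJ, LM)
  end.

(* one greedy step on block B with parent cut-vertex pu; all tie breaking
   (order of jobs, choice/order of least loaded machines) is arbitrary *)
Definition gstep (s s' : T -> option 'I_m) (B : {set T}) (pu : option T) : Prop :=
  exists (LJ : seq T) (LM : seq 'I_m),
    [/\ perm_eq LJ (enum B), uniq LM, size LM = #|B|,
        (sorted (fun a b => load s a <= load s b) LM /\
        (forall M M', M \in LM -> M' \notin LM -> load s M <= load s M')) &
        (forall x, s' x =
          if x \in (adjust s pu LJ LM).1
          then nth None (map Some (adjust s pu LJ LM).2)
                   (index x (adjust s pu LJ LM).1)
          else s x)].

Fixpoint grun (s : T -> option 'I_m) (bs : seq ({set T} * option T))
    (s' : T -> option 'I_m) : Prop :=
  match bs with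
  | [::] => forall x, s' x = s x
  | (B, pu) :: r => exists s1, gstep s s1 B pu /\ grun s1 r s'
  end.

Definition greedy_output (out : T -> option 'I_m) : Prop :=
  exists (par : bc_node -> option bc_node) (s : seq bc_node),
    [/\ rooting par, preorder par s & grun (fun _ => None) (block_seq par s) out].

End Graphs.

Definition ceil_div (n k : nat) : nat := (n + k.-1) %/ k.

From mathcomp Require Import all_boot zify.
Set Implicit Arguments.
Unset Strict Implicit.
Unset Printing Implicit Defensive.

(* Each greedy step puts the unassigned jobs of a block on distinct machines of
   least load, skipping at most one machine (that of the parent cut-vertex).
   Hence, as soon as some machine has load t, every machine but one has load
   at least t - 1, and with n jobs (m - 1) (t - 1) + #{M | load M >= t} <= n.
   For n = d (m - 1) + r this rules out loads above ceil (n / (m - 1)) and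
   bounds the number of machines that reach it.  The pre-order guarantees that
   a block meets the earlier ones only in its parent cut-vertex, so every step
   extends the partial schedule properly. *)

Lemma ceil_div_mulnD k d r :
  0 < k -> r <= k -> ceil_div (d * k + r) k = d + (0 < r).
Proof.
move=> k_gt0 r_le; rewrite /ceil_div.
case: r r_le => [|r] r_le.
  by rewrite addn0 divnMDl // divn_small ?addn0 //; lia.
rewrite (_ : d * k + r.+1 + k.-1 = d.+1 * k + r); last by rewrite mulSn; lia.
by rewrite divnMDl // divn_small ?addn0 ?addn1 //; lia.
Qed.

Lemma card_Some_eq_le1 (U : finType) (o : option U) : #|[set x | Some x == o]| <= 1.
Proof.
case: o => [y|]; last by rewrite (_ : [set x | _] = set0) ?cards0 //; apply/setP=> x.
by rewrite (_ : [set x | _] = [set y]) ?cards1 //; apply/setP=> x; rewrite !inE.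
Qed.

Section LoadInvariant.
Variable m : nat.
Implicit Types (l : 'I_m -> nat) (b : seq 'I_m).

Definition nloaded l t := #|[set M | t <= l M]|.

(* Once some machine carries t jobs, all machines but one carry at least
   t - 1: then nloaded l t machines hold t jobs and m - 1 - nloaded l t more
   hold t - 1, which accounts for (m - 1) * (t - 1) + nloaded l t jobs. *)
Definition load_invariant l N :=
  forall t, 0 < t -> 0 < nloaded l t -> (m - 1) * (t - 1) + nloaded l t <= N.

Lemma eq_load_invariant l1 l2 N :
  l1 =1 l2 -> load_invariant l1 N -> load_invariant l2 N.
Proof.
by move=> eql inv t; rewrite /nloaded; under eq_finset do rewrite -eql; apply: inv.
Qed.

Lemma load_invariant0 N : load_invariant (fun=> 0) N.
Proof.
move=> t t_gt0; rewrite /nloaded card_gt0 => /set0Pn [M].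
by rewrite inE leqNgt t_gt0.
Qed.

Lemma nloaded_step l l' b t :
  uniq b -> (forall M, l' M = l M + (M \in b)) ->
  nloaded l' t <= nloaded l t + size b.
Proof.
move=> ub incr; rewrite -(card_uniqP ub) -cardsE.
apply: leq_trans (leq_card_setU [set M | t <= l M] [set M | M \in b]).
apply: subset_leq_card; apply/subsetP=> M; rewrite !inE incr.
by case: (M \in b); rewrite ?orbT ?addn0 // => ->.
Qed.

(* Raising the maximum load to t: the machines reaching t were all among the
   least loaded ones, so every machine outside b, except Mx, already had the
   load t - 1 of those machines. *)
Lemma load_invariant_new_level l l' b N (Mx : option 'I_m) t :
  uniq b -> (forall M, l' M = l M + (M \in b)) ->
  (forall M M', M \in b -> M' \notin b -> Some M' != Mx -> l M <= l M') ->
  load_invariant l N -> 1 < t -> nloaded l t = 0 -> 0 < nloaded l' t ->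
  (m - 1) * (t - 1) + nloaded l' t <= N + size b.
Proof.
move=> ub incr least inv t_gt1 /eqP; rewrite cards_eq0 => /eqP/setP low.
have {}low M : l M < t by rewrite ltnNge; have := low M; rewrite !inE => ->.
rewrite /nloaded card_gt0 => /set0Pn [M0]; rewrite inE incr.
have := low M0; case: (boolP (M0 \in b)) => [M0b|_] /=; last by rewrite addn0; lia.
move=> ltM0 geM0; have lM0 : l M0 = t - 1 by lia.
set top := [set M | t <= l' M]; set Bs := [set M | M \in b].
have top_b : top \subset Bs.
  apply/subsetP=> M; rewrite !inE incr; have := low M.
  by case: (M \in b) => //; rewrite addn0 ltnNge => /negbTE ->.
set others := ~: Bs :\: [set M | Some M == Mx].
have sub : top :|: others \subset [set M | t - 1 <= l M].
  apply/subsetP=> M; rewrite !inE => /orP [|/andP [notMx notb]].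
    by rewrite incr; have := low M; case: (M \in b) => /=; lia.
  by rewrite -lM0; apply: least.
have disj : top :&: others = set0.
  apply/setP=> M; rewrite in_set0; apply/negbTE/negP => /setIP [/(subsetP top_b)].
  by rewrite /others /Bs !inE => ->; rewrite andbF.
have card_Bs : #|Bs| = size b by rewrite cardsE; apply/card_uniqP.
have card_Mx := card_Some_eq_le1 Mx.
have card_others : m - size b - 1 <= #|others|.
  rewrite cardsD; have := cardsC Bs; rewrite card_ord card_Bs.
  have := subset_leq_card (subsetIr (~: Bs) [set M | Some M == Mx]).
  lia.
have := subset_leq_card sub; rewrite cardsU disj cards0 subn0 => le_top.
have := inv (t - 1) (ltac:(lia)); rewrite /nloaded card_gt0.
have /[swap]/[apply] : [set M | t - 1 <= l M] != set0.
  by apply/set0Pn; exists M0; rewrite inE lM0.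
have := max_card (mem Bs); rewrite card_ord card_Bs.
have -> : (m - 1) * (t - 1) = (m - 1) * (t - 1 - 1) + (m - 1).
  by rewrite -mulnSr; congr (_ * _); lia.
set k := (m - 1) * _; clearbody k; move: le_top card_others.
move: #|top| #|others| #|[set M | t - 1 <= l M]|; lia.
Qed.

Lemma load_invariant_step l l' b N (Mx : option 'I_m) :
  uniq b -> (forall M, l' M = l M + (M \in b)) ->
  (forall M M', M \in b -> M' \notin b -> Some M' != Mx -> l M <= l M') ->
  load_invariant l N -> load_invariant l' (N + size b).
Proof.
move=> ub incr least inv t t_gt0 pos'.
have le_step := nloaded_step t ub incr.
have [zero|pos] := posnP (nloaded l t); last by have := inv t t_gt0 pos; lia.
have [t_gt1|t_le1] := ltnP 1 t; first exact: load_invariant_new_level least inv _ _ _.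
by rewrite (_ : t - 1 = 0) ?muln0; lia.
Qed.

Lemma load_invariant_max l N c :
  load_invariant l N -> N <= (m - 1) * c -> forall M, l M <= c.
Proof.
move=> inv N_le M; rewrite leqNgt; apply/negP=> lt_cM.
have pos : 0 < nloaded l c.+1 by rewrite /nloaded card_gt0; apply/set0Pn; exists M; rewrite inE.
by have := inv c.+1 isT pos; rewrite subn1 /=; lia.
Qed.

Lemma load_invariant_card_lt l N c :
  load_invariant l N -> 0 < c -> m - (N - (m - 1) * (c - 1)) <= #|[set M | l M < c]|.
Proof.
move=> inv c_gt0.
have -> : [set M | l M < c] = ~: [set M | c <= l M] by apply/setP=> M; rewrite !inE ltnNge.
have := cardsC [set M | c <= l M]; rewrite card_ord -/(nloaded l c).
have [->|pos] := posnP (nloaded l c); first lia.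
by have := inv c c_gt0 pos; lia.
Qed.

Lemma load_invariant_ceil_bounds l n d r :
  2 <= m -> 0 < n -> n = d * (m - 1) + r -> r <= m - 2 -> load_invariant l n ->
  [/\ forall M, l M <= ceil_div n (m - 1),
      r = 0 -> exists M, l M < ceil_div n (m - 1)
    & 0 < r -> m - r <= #|[set M | l M < ceil_div n (m - 1)]|].
Proof.
move=> m_ge2 n_gt0 def_n r_le inv; rewrite def_n ceil_div_mulnD; try lia.
split.
- by apply: load_invariant_max inv _; rewrite def_n; case: (r) r_le => [|r'] /=; nia.
- move=> r0; have d_gt0 : 0 < d by move: n_gt0; rewrite def_n r0; nia.
  have := load_invariant_card_lt inv d_gt0; rewrite def_n r0 addn0.
  have -> : d * (m - 1) - (m - 1) * (d - 1) = m - 1.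
    by rewrite mulnC -mulnBr -[d in d - _]subn0 subKn // muln1.
  rewrite (_ : m - (m - 1) = 1); last lia.
  by rewrite card_gt0 addn0 => /set0Pn [M]; rewrite inE; exists M.
- move=> r_gt0; have := load_invariant_card_lt inv (ltn0Sn d).
  by rewrite def_n r_gt0 addn1 subSS subn0 mulnC addKn.
Qed.
End LoadInvariant.

Lemma onth_index (U : eqType) (s : seq U) x : x \in s -> onth s (index x s) = Some x.
Proof. by move=> xs; rewrite onthE (nth_map x) ?index_mem // nth_index. Qed.

Lemma sorted_take_drop (U : eqType) (leT : rel U) n (s : seq U) x y :
  transitive leT -> sorted leT s -> x \in take n s -> y \in drop n s -> leT x y.
Proof.
move=> leT_tr; rewrite -[s in sorted _ s](cat_take_drop n) sorted_pairwise //.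
by rewrite pairwise_cat => /and3P [/allrelP le_td _ _]; apply: le_td.
Qed.

Section RemOrDroplast.
Variables (U : eqType) (z : U) (L : seq U).

Definition rem_or_droplast := if z \in L then rem z L else take (size L).-1 L.

Lemma rem_or_droplast_uniq : uniq L -> uniq rem_or_droplast.
Proof. by rewrite /rem_or_droplast; case: ifP => _; [apply: rem_uniq | apply: take_uniq]. Qed.

Lemma rem_or_droplast_notin : uniq L -> z \notin rem_or_droplast.
Proof.
rewrite /rem_or_droplast; case: ifP => [_|zL] uL; first by rewrite mem_rem_uniqF.
by apply: contraFN zL; apply: mem_take.
Qed.

Lemma size_rem_or_droplast : size rem_or_droplast = (size L).-1.
Proof.
rewrite /rem_or_droplast; case: ifP => [/size_rem //|_].
by rewrite size_take; case: (size L) => //= n; rewrite ltnSn.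
Qed.

Lemma subset_rem_or_droplast : {subset rem_or_droplast <= L}.
Proof.
by rewrite /rem_or_droplast; case: ifP => _ x; [apply: mem_rem | apply: mem_take].
Qed.

Lemma rem_or_droplast_least (f : U -> nat) :
  uniq L -> sorted (fun x y => f x <= f y) L ->
  (forall x y, x \in L -> y \notin L -> f x <= f y) ->
  forall x y, x \in rem_or_droplast -> y \notin rem_or_droplast -> y != z -> f x <= f y.
Proof.
move=> uL sL least x y xL' yL' yz; have xL := subset_rem_or_droplast xL'.
have [yL|] := boolP (y \in L); last exact: least.
move: xL' yL'; rewrite /rem_or_droplast; case: ifP => _.
  by rewrite !(mem_rem_uniq _ uL) !inE yz yL.
move=> xt yt; apply: (sorted_take_drop (leT := fun x y => f x <= f y)) xt _ => //.
  by move=> ? ? ?; apply: leq_trans.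
by move: yL; rewrite -{1}[L](cat_take_drop (size L).-1) mem_cat (negbTE yt).
Qed.

End RemOrDroplast.

Section Assignment.
Variables (T : finType) (m : nat).
Implicit Types (s : T -> option 'I_m) (a : seq T) (b : seq 'I_m).

Definition assigned s := [set x | s x != None].

Definition assigns s s' a b :=
  [/\ uniq a, uniq b, size a = size b,
      {in a, forall x, s x = None /\ s' x = onth b (index x a)}
    & forall x, x \notin a -> s' x = s x].

Lemma assigns_nth s s' a b :
  uniq a -> uniq b -> size a = size b -> {in a, forall x, s x = None} ->
  (forall x, s' x = if x \in a then nth None (map Some b) (index x a) else s x) ->
  assigns s s' a b.
Proof.
move=> ua ub sab fresh def_s'; split=> // x xa; last by rewrite def_s' (negbTE xa).
by rewrite def_s' xa -onthE fresh.
Qed.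

Section Assigns.
Variables (s s' : T -> option 'I_m) (a : seq T) (b : seq 'I_m).
Hypothesis sab : assigns s s' a b.

Lemma assigns_Some x : x \in a -> exists2 M, s' x = Some M & M \in b.
Proof.
case: sab => _ _ size_ab def_s' _ xa; have [_ ->] := def_s' x xa.
have : index x a < size b by rewrite -size_ab index_mem.
rewrite -onthTE; case E: onth => [M|] // _; exists M => //.
by apply/onthP; exists (index x a).
Qed.

Lemma assigns_inj : {in a &, injective s'}.
Proof.
case: sab => _ ub size_ab def_s' _ x y xa ya; rewrite (def_s' x xa).2 (def_s' y ya).2.
move/(onth_inj _ _ _ ub); rewrite -size_ab gtn_min !index_mem xa ya => /(_ isT) eq_index.
exact: index_inj eq_index.
Qed.

Lemma assigns_onto M : M \in b -> exists2 x, x \in a & s' x = Some M.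
Proof.
case: sab => ua _ size_ab def_s' _ Mb.
have : index M b < size a by rewrite size_ab index_mem.
rewrite -onthTE; case E: onth => [x|] // _.
have xa : x \in a by apply/onthP; exists (index M b).
exists x; rewrite // (def_s' x xa).2.
rewrite (onth_inj a (index x a) (index M b) ua) ?onth_index ?E //.
by rewrite gtn_min index_mem xa orbT.
Qed.

Lemma load_assigns M : load s' M = load s M + (M \in b).
Proof.
case: sab => _ _ _ def_s' keep_s; rewrite /load.
have -> : [set x | s' x == Some M] =
          [set x | s x == Some M] :|: [set x | (x \in a) && (s' x == Some M)].
  apply/setP=> x; rewrite !inE; case: (boolP (x \in a)) => xa /=.
    by rewrite (def_s' x xa).1.
  by rewrite orbF keep_s.
rewrite cardsU (_ : _ :&: _ = set0) ?cards0 ?subn0; last first.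
  apply/setP=> x; rewrite !inE; apply/negbTE/negP=> /andP [/eqP + /andP [xa _]].
  by rewrite (def_s' x xa).1.
congr (_ + _); case: (boolP (M \in b)) => [/assigns_onto [x xa sx]|Mb].
  rewrite (_ : [set x | _] = [set x]) ?cards1 //; apply/setP=> y; rewrite !inE.
  apply/andP/eqP=> [[ya /eqP]|->]; last by rewrite xa sx.
  by rewrite -sx => /assigns_inj; apply.
apply/eqP; rewrite cards_eq0; apply/eqP/setP=> y; rewrite !inE.
apply/negbTE/andP=> -[/assigns_Some [M' -> M'b] /eqP [eqM]].
by move: Mb; rewrite -eqM M'b.
Qed.

Lemma card_assigned_assigns : #|assigned s'| = #|assigned s| + size b.
Proof.
case: sab => ua _ size_ab def_s' keep_s.
have -> : assigned s' = assigned s :|: [set x in a].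
  apply/setP=> x; rewrite !inE; case: (boolP (x \in a)) => xa /=.
    by have [M -> _] := assigns_Some xa; rewrite orbT.
  by rewrite orbF keep_s.
rewrite cardsU (_ : _ :&: _ = set0) ?cards0 ?subn0; last first.
  apply/setP=> x; rewrite !inE; apply/negbTE/negP=> /andP [+ xa].
  by rewrite (def_s' x xa).1.
by rewrite (cardsE (mem a)) -size_ab (card_uniqP ua).
Qed.

End Assigns.

(* Mx is the machine of an already placed parent cut-vertex, which the greedy
   step may skip in favour of a fuller one. *)
Definition block_extension s s' (B : {set T}) :=
  exists a b, exists Mx : option 'I_m,
  [/\ assigns s s' a b, {subset a <= B},
      forall x, x \in B -> x \notin a -> exists2 M, s x = Some M & M \notin b
    & forall M M', M \in b -> M' \notin b -> Some M' != Mx -> load s M <= load s M'].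

Section BlockExtension.
Variables (s s' : T -> option 'I_m) (B : {set T}).
Hypothesis ext : block_extension s s' B.

Lemma extension_keep x : s x != None -> s' x = s x.
Proof.
have [a [b [_ [[_ _ _ def_s' keep_s] _ _ _]]]] := ext.
by move=> sx; apply: keep_s; apply: contra sx => /def_s' [-> _].
Qed.

Lemma extension_assigned x : s' x != None -> s x != None \/ x \in B.
Proof.
have [a [b [_ [[_ _ _ _ keep_s] sub_aB _ _]]]] := ext.
by case: (boolP (x \in a)) => [/sub_aB|/keep_s ->]; [right | left].
Qed.

Lemma extension_covers x : x \in B -> s' x != None.
Proof.
have [a [b [_ [sab _ old _]]]] := ext.
case: (boolP (x \in a)) => [/(assigns_Some sab) [M -> _] //|xa xB].
by have [M sx _] := old x xB xa; rewrite extension_keep sx.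
Qed.

Lemma extension_proper x y :
  {in B &, forall x y, s x != None -> s y != None -> x = y} ->
  x \in B -> y \in B -> x != y -> s' x != s' y.
Proof.
have [a [b [_ [sab _ old _]]]] := ext; move=> old_uniq xB yB.
have new_old z w : z \in a -> w \in B -> w \notin a -> s' z != s' w.
  move=> za wB wa; have [M -> Mb] := assigns_Some sab za.
  have [M' sw M'b] := old w wB wa; rewrite extension_keep ?sw //.
  by apply: contraNneq M'b => -[<-].
apply: contra_neq; case: (boolP (x \in a)) => xa; case: (boolP (y \in a)) => ya.
- exact: (assigns_inj sab).
- by move/eqP; rewrite (negbTE (new_old _ _ xa yB ya)).
- by move/esym/eqP; rewrite (negbTE (new_old _ _ ya xB xa)).
- have [M sx _] := old x xB xa; have [M' sy _] := old y yB ya.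
  by move=> _; apply: old_uniq; rewrite ?sx ?sy.
Qed.

Lemma extension_load_invariant :
  load_invariant (load s) #|assigned s| -> load_invariant (load s') #|assigned s'|.
Proof.
have [a [b [Mx [sab _ _ least]]]] := ext.
rewrite (card_assigned_assigns sab); case: (sab) => _ ub _ _ _.
exact: load_invariant_step ub (load_assigns sab) least.
Qed.

End BlockExtension.
End Assignment.

Section GreedyStep.
Variables (T : finType) (m : nat) (s s' : T -> option 'I_m).
Variables (B : {set T}) (pu : option T).
Hypothesis parent_in_block : forall u, pu = Some u -> u \in B.
Hypothesis assigned_is_parent : forall x, x \in B -> s x != None -> pu = Some x.

Lemma gstep_extension : gstep s s' B pu -> block_extension s s' B.
Proof.
move=> [LJ [LM [pLJ uLM size_LM [sorted_LM least] def_s']]].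
have uLJ : uniq LJ by rewrite (perm_uniq pLJ) enum_uniq.
have mem_LJ x : (x \in LJ) = (x \in B) by rewrite (perm_mem pLJ) mem_enum.
have size_LJ : size LJ = #|B| by rewrite (perm_size pLJ) cardE.
have fresh_step : (forall x, x \in B -> s x = None) ->
    (forall x, s' x = if x \in LJ then nth None (map Some LM) (index x LJ) else s x) ->
    block_extension s s' B.
  move=> fresh def_s'_fresh; exists LJ, LM, None; split.
  - apply: assigns_nth; rewrite ?size_LJ // => x; rewrite mem_LJ; exact: fresh.
  - by move=> x; rewrite mem_LJ.
  - by move=> x xB; rewrite mem_LJ xB.
  - by move=> M M' ML M'L _; apply: least.
move: def_s'; rewrite /adjust.
case Epu: pu => [u|]; last first.
  by apply: fresh_step => x xB; apply/eqP; apply: contraT => /(assigned_is_parent xB); rewrite Epu.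
case Esu: (s u) => [M'|]; last first.
  apply: fresh_step => x xB; apply/eqP; apply: contraT => sx.
  by have := assigned_is_parent xB sx; rewrite Epu => -[eux]; move: sx; rewrite -eux Esu.
have uB : u \in B by apply: parent_in_block.
have mem_remLJ x : (x \in rem u LJ) = (x != u) && (x \in B).
  by rewrite (mem_rem_uniq _ uLJ) inE mem_LJ.
change (if M' \in LM then rem M' LM else take (size LM).-1 LM) with (rem_or_droplast M' LM).
move=> def_s'; exists (rem u LJ), (rem_or_droplast M' LM), (Some M'); split.
- apply: assigns_nth => //; first exact: rem_uniq.
  + exact: rem_or_droplast_uniq.
  + by rewrite size_rem_or_droplast size_rem ?mem_LJ // size_LJ size_LM.
  move=> x; rewrite mem_remLJ => /andP [xu xB]; apply/eqP; apply: contraT => sx.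
  by have := assigned_is_parent xB sx; rewrite Epu => -[eux]; rewrite eux eqxx in xu.
- by move=> x; rewrite mem_remLJ => /andP [].
- move=> x xB; rewrite mem_remLJ xB andbT negbK => /eqP ->.
  by exists M'; last exact: rem_or_droplast_notin.
- exact: rem_or_droplast_least.
Qed.

End GreedyStep.

Section GreedyRun.
Variables (T : finType) (m : nat).

Definition meets_at_parent (p q : {set T} * option T) : bool :=
  [forall x in p.1 :&: q.1, q.2 == Some x].

Lemma grun_spec (bs : seq ({set T} * option T)) (s out : T -> option 'I_m) :
  (forall B pu u, (B, pu) \in bs -> pu = Some u -> u \in B) ->
  pairwise meets_at_parent bs ->
  (forall B pu x, (B, pu) \in bs -> x \in B -> s x != None -> pu = Some x) ->
  grun s bs out ->
  [/\ forall x, s x != None -> out x = s x,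
      forall B pu x, (B, pu) \in bs -> x \in B -> out x != None,
      forall B pu x y, (B, pu) \in bs -> x \in B -> y \in B -> x != y -> out x != out y
    & load_invariant (load s) #|assigned s| -> load_invariant (load out) #|assigned out|].
Proof.
elim: bs s => [|[B pu] bs IH] s parent_in /= meets fresh.
  move=> eq_out; have eq_load M : load out M = load s M.
    by apply: eq_card => x; rewrite !inE eq_out.
  split=> // inv; rewrite (_ : assigned out = assigned s).
    by apply: eq_load_invariant inv => M; rewrite eq_load.
  by apply/setP=> x; rewrite !inE eq_out.
move=> [s1 [step run]]; move: meets => /andP [meets_B meets].
have in_bs B' pu' : (B', pu') \in bs -> (B', pu') \in (B, pu) :: bs.
  by move=> inbs; rewrite in_cons inbs orbT.
have parent_in_B u : pu = Some u -> u \in B by apply: parent_in; rewrite mem_head.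
have fresh_B x : x \in B -> s x != None -> pu = Some x by apply: fresh; rewrite mem_head.
have ext := gstep_extension parent_in_B fresh_B step.
have fresh1 B' pu' x : (B', pu') \in bs -> x \in B' -> s1 x != None -> pu' = Some x.
  move=> inbs xB' /(extension_assigned ext) [sx|xB]; first exact: fresh (in_bs _ _ inbs) xB' sx.
  have /forall_inP /(_ x) := allP meets_B _ inbs.
  by rewrite inE xB xB' => /(_ isT) /eqP.
have parent_in1 B' pu' u : (B', pu') \in bs -> pu' = Some u -> u \in B'.
  by move/in_bs; apply: parent_in.
have [keep covers proper inv] := IH s1 parent_in1 meets fresh1 run.
have old_uniq : {in B &, forall x y, s x != None -> s y != None -> x = y}.
  by move=> x y xB yB /(fresh_B x xB) px /(fresh_B y yB); rewrite px => -[].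
split.
- by move=> x sx; have s1x := extension_keep ext sx; rewrite keep ?s1x.
- move=> B' pu' x; rewrite in_cons => /orP [/eqP [-> _]|inbs] xB'; last exact: covers inbs xB'.
  by have s1x := extension_covers ext xB'; rewrite keep.
- move=> B' pu' x y; rewrite in_cons => /orP [/eqP [-> _]|inbs] xB' yB' xy.
    have s1x := extension_covers ext xB'; have s1y := extension_covers ext yB'.
    by rewrite !keep //; exact: (extension_proper ext old_uniq xB' yB' xy).
  exact: proper inbs xB' yB' xy.
- by move=> inv0; apply/inv/(extension_load_invariant ext).
Qed.

End GreedyRun.

Lemma pairwise_pmap (U V : eqType) (f : U -> option V) (r : rel V) (s : seq U) :
  pairwise (fun x y => if (f x, f y) is (Some p, Some q) then r p q else true) s ->
  pairwise r (pmap f s).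
Proof.
elim: s => //= x s IH /andP [rel_x /IH {}IH]; case E: (f x) => [p|] //=.
rewrite IH andbT; apply/allP=> q; rewrite mem_pmap => /mapP [y ys fy].
by have := allP rel_x y ys; rewrite E -fy.
Qed.

Section BlockCutForest.
Variables (T : finType) (e : rel T).

Lemma clique_sub_block (C : {set T}) x :
  is_clique e C -> x \in C -> exists2 B, is_block e B & C \subset B.
Proof.
have cliqueP (D : {set T}) :
    reflect (is_clique e D) [forall a in D, forall b in D, (a != b) ==> e a b].
  apply: (iffP forall_inP) => [cl a b aD bD ab | cl a aD].
    by have /forall_inP /(_ b bD) /implyP := cl a aD; apply.
  by apply/forall_inP => b bD; apply/implyP; apply: cl.
move=> /cliqueP cl_C xC.
have [B /andP [/cliqueP cl_B sub_CB] max_B] :=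
  @arg_maxnP _ C (fun D => [forall a in D, forall b in D, (a != b) ==> e a b] && (C \subset D))
    (fun D => #|D|) (introT andP (conj cl_C (subxx C))).
exists B => //; split=> //; first by apply/set0Pn; exists x; apply: (subsetP sub_CB).
move=> D cl_D sub_BD; apply/eqP; rewrite eq_sym eqEcard sub_BD /=.
by apply: max_B; rewrite (subset_trans sub_CB sub_BD) andbT; apply/cliqueP.
Qed.

Variable par : bc_node T -> option (bc_node T).
Hypothesis root : rooting e par.

Lemma mem_block_seq (s : seq (bc_node T)) B pu :
  ((B, pu) \in block_seq par s) = (inl B \in s) && (pu == parent_cut par (inl B)).
Proof.
rewrite mem_pmap; apply/mapP/andP => [[[B'|v] //= ys [-> ->]]|[Bs /eqP ->]] //.
by exists (inl B).
Qed.

Lemma block_seq_parent_in s B pu u :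
  (B, pu) \in block_seq par s -> pu = Some u -> u \in B.
Proof.
case: root => par_adj _ _; rewrite mem_block_seq => /andP [_ /eqP ->].
rewrite /parent_cut; case E: (par (inl B)) => [[B'|v]|] //= [<-].
by have [_ _] := par_adj _ _ E.
Qed.

(* A vertex shared by two blocks is a cut-vertex adjacent to both; unless it
   is the parent of the later block, it is the parent of the earlier one and
   a child of the later one, so the earlier block descends from the later. *)
Lemma preorder_meets_at_parent s :
  preorder e par s -> pairwise (@meets_at_parent T) (block_seq par s).
Proof.
case: root => _ par_or_child _ [us in_s desc_index _]; apply: pairwise_pmap.
apply/(pairwiseP (inl set0)) => i j; rewrite !inE => ilt jlt ij.
case Ex: (nth _ s i) => [B1|v] //; case Ey: (nth _ s j) => [B2|w] //=.
have B1s : inl B1 \in s by rewrite -Ex mem_nth.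
have B2s : inl B2 \in s by rewrite -Ey mem_nth.
have [bB1 bB2] : is_block e B1 /\ is_block e B2 by split; apply/(in_s (inl _)).
have iB1 : index (inl B1) s = i by rewrite -Ex index_uniq.
have iB2 : index (inl B2) s = j by rewrite -Ey index_uniq.
have B12 : B1 != B2 by apply: contraTneq ij => eqB; rewrite -iB1 -iB2 eqB ltnn.
apply/forall_inP => x; rewrite inE => /andP [xB1 xB2] /=.
have cut_x : is_cut e x by exists B1, B2.
have [par_B2|par_x] := par_or_child (inl B2) (inr x) bB2 cut_x xB2.
  by rewrite /parent_cut par_B2.
have [par_B1|] := par_or_child (inl B1) (inr x) bB1 cut_x xB1; last first.
  by rewrite par_x => -[eqB]; rewrite eqB eqxx in B12.
have desc21 : desc par (inl B2) (inl B1).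
  by apply: (connect_trans (y := inr x)); apply: connect1; rewrite /= ?par_B1 ?par_x.
by have := desc_index _ _ B2s B1s desc21; rewrite iB1 iB2 leqNgt ij.
Qed.

Lemma clique_sub_block_seq s (C : {set T}) x :
  preorder e par s -> is_clique e C -> x \in C ->
  exists2 B, (B, parent_cut par (inl B)) \in block_seq par s & C \subset B.
Proof.
move=> [_ in_s _ _] cl_C /(clique_sub_block cl_C) [B bB sub_CB]; exists B => //.
by rewrite mem_block_seq eqxx andbT; apply/(in_s (inl B)).
Qed.

End BlockCutForest.

Theorem mainTheorem3 (T : finType) (e : rel T) (m d r : nat)
    (out : T -> option 'I_m) :
  symmetric e -> irreflexive e -> block_graph e ->
  2 <= m -> 1 <= #|T| -> clique_bound e m ->
  #|T| = d * (m - 1) + r -> r <= m - 2 ->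
  greedy_output e out ->
  [/\ forall x, out x != None,
      forall x y, e x y -> out x != out y,
      forall M, load out M <= ceil_div #|T| (m - 1),
      r = 0 -> exists M, load out M < ceil_div #|T| (m - 1)
    & 0 < r -> m - r <= #|[set M | load out M < ceil_div #|T| (m - 1)]|].
Proof.
move=> e_sym e_irr _ m_ge2 T_gt0 _ def_n r_le [par [s [root pre run]]].
have none_fresh B pu x : (B, pu) \in block_seq par s -> x \in B ->
  (fun=> None : option 'I_m) x != None -> pu = Some x by [].
have [_ covers proper inv] := grun_spec (block_seq_parent_in root (s := s))
  (preorder_meets_at_parent root pre) none_fresh run.
have out_total x : out x != None.
  have cl_x : is_clique e [set x] by move=> a b /set1P -> /set1P ->; rewrite eqxx.
  have [B inB /subsetP/(_ x (set11 x))] := clique_sub_block_seq pre cl_x (set11 x).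
  exact: covers _ _ _ inB.
have inv_out : load_invariant (load out) #|T|.
  rewrite -cardsT -(_ : assigned out = setT); last by apply/setP=> x; rewrite !inE out_total.
  apply: inv; apply: (eq_load_invariant (l1 := fun=> 0)); last exact: load_invariant0.
  by move=> M; apply/esym/eqP; rewrite cards_eq0; apply/eqP/setP=> x; rewrite !inE.
have [load_le ? ?] := load_invariant_ceil_bounds m_ge2 T_gt0 def_n r_le inv_out.
split=> // x y exy.
have xy : x != y by apply: contraTneq exy => ->; rewrite e_irr.
have cl_xy : is_clique e [set x; y].
  by move=> a b /set2P [] -> /set2P [] -> //; rewrite ?eqxx // => _; rewrite e_sym.
have [B inB /subsetP sub_B] := clique_sub_block_seq pre cl_xy (setU11 x [set y]).
by apply: (proper _ _ _ _ inB) xy; apply: sub_B; rewrite !inE eqxx ?orbT.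
Qed.
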